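(* Let $A,B\in\mathcal{M}_d(\mathbb{C})$ with $\operatorname{diag}(A)=\operatorname{diag}(B)$, such that $A$ is entrywise nonnegative, $B$ is positive semidefinite, and $A_{ij}A_{ji}\ge|B_{ij}|^2$ for all $i,j$. If moreover $B$ is diagonally dominant, then $(A,B)\in\mathsf{PCP}_d^2$.
   Context: $B$ is diagonally dominant if $|B_{ii}|\ge\sum_{j\ne i}|B_{ij}|$ and $|B_{ii}|\ge\sum_{j\ne i}|B_{ji}|$ for all $i$. For $v\in\mathbb{C}^d$, $\sigma(v)$ is the number of nonzero coordinates; $\odot$ is the entrywise product, $\bar v$ the entrywise conjugate. $(A,B)\in\mathsf{PCP}_d^2$ means there are finitely many vectors $v_n,w_n\in\mathbb{C}^d$ with $\sigma(v_n\odot w_n)\le2$ for all $n$, $A=\sum_n|v_n\odot\bar v_n\rangle\langle w_n\odot\bar w_n|$ and $B=\sum_n|v_n\odot w_n\rangle\langle v_n\odot w_n|$. *)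

(* Complex numbers are modelled as R[i] (mathcomp-real-closed
   complex) over an arbitrary R : realType (a model of the reals). *)
From HB Require Import structures.
From mathcomp Require Import all_boot all_order all_algebra.
From mathcomp Require Import complex.
From mathcomp Require Import reals.
Set Implicit Arguments. Unset Strict Implicit. Unset Printing Implicit Defensive.
Import Order.TTheory GRing.Theory Num.Theory.
Local Open Scope ring_scope.

Section Defs.
Variable C : numClosedFieldType.
Variable d : nat.

Definition hadv (v w : 'cV[C]_d) : 'cV[C]_d := \col_i (v i 0 * w i 0).
Definition conjv (v : 'cV[C]_d) : 'cV[C]_d := \col_i (v i 0)^*.
Definition ketbra (x y : 'cV[C]_d) : 'M[C]_d := x *m (conjv y)^T.
Definition sigma (v : 'cV[C]_d) : nat := #|[set i | v i 0 != 0]|.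

Definition diag_dominant (B : 'M[C]_d) : Prop :=
  forall i : 'I_d,
    \sum_(j < d | j != i) `|B i j| <= `|B i i| /\
    \sum_(j < d | j != i) `|B j i| <= `|B i i|.

Definition entrywise_nonneg (A : 'M[C]_d) : Prop := forall i j, 0 <= A i j.

(* positive semidefinite: x^dagger B x >= 0 (in particular real) for all x *)
Definition psd (B : 'M[C]_d) : Prop :=
  forall x : 'cV[C]_d, 0 <= ((conjv x)^T *m B *m x) 0 0.

Definition PCP2 (A B : 'M[C]_d) : Prop :=
  exists s : seq ('cV[C]_d * 'cV[C]_d),
    (forall p, p \in s -> (sigma (hadv p.1 p.2) <= 2)%N) /\
    A = \sum_(p <- s) ketbra (hadv p.1 (conjv p.1)) (hadv p.2 (conjv p.2)) /\
    B = \sum_(p <- s) ketbra (hadv p.1 p.2) (hadv p.1 p.2).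
End Defs.

From mathcomp Require Import all_boot all_order all_algebra.
From mathcomp Require Import complex.
From mathcomp Require Import reals.
From mathcomp Require Import ring.

(* Split B into a diagonal part and, for every ordered pair i <> j, the 2x2 block
   [[b, c], [c^*, b]] with c = B_ij / 2 and b = |c|, paired with the block
   [[b, a], [a', b]] of A, where a = A_ij / 2 and a' = A_ji / 2.  Diagonal
   dominance makes the remaining diagonal B_kk - sum_j (|B_kj| + |B_jk|) / 2
   nonnegative, so it is a sum of one-coordinate PCP terms.  Each pair of blocks
   is one PCP term supported on {i, j} plus a term that only adds the slack
   a' - b^2 / a >= 0 to A_ji and contributes nothing to B. *)

Set Implicit Arguments.
Unset Strict Implicit.
Unset Printing Implicit Defensive.

Import Order.TTheory GRing.Theory Num.Theory.
Local Open Scope ring_scope.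

Section Block2.
Variable F : numFieldType.
Variable d : nat.
Implicit Type M : 'M[F]_d.

Definition block2 (i j : 'I_d) (p q r s : F) : 'M[F]_d :=
  p *: delta_mx i i + q *: delta_mx i j + r *: delta_mx j i + s *: delta_mx j j.

Lemma block2D (i j : 'I_d) p q r s p' q' r' s' :
  block2 i j p q r s + block2 i j p' q' r' s' =
  block2 i j (p + p') (q + q') (r + r') (s + s').
Proof. by apply/matrixP => k l; rewrite !mxE; ring. Qed.

Lemma block2_0 (i j : 'I_d) : block2 i j 0 0 0 0 = 0.
Proof. by rewrite /block2 !scale0r !addr0. Qed.

Lemma sum_offdiagC (V : nmodType) (G : 'I_d -> 'I_d -> V) :
  \sum_i \sum_(j | j != i) G i j = \sum_i \sum_(j | j != i) G j i.
Proof.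
rewrite (exchange_big_dep xpredT) //=; apply: eq_bigr => i _.
by apply: eq_bigl => j; rewrite eq_sym.
Qed.

Lemma matrix_sum_delta_offdiag M :
  M = \sum_k M k k *: delta_mx k k + \sum_i \sum_(j | j != i) M i j *: delta_mx i j.
Proof.
rewrite {1}[M]matrix_sum_delta -big_split; apply: eq_bigr => i _.
by rewrite (bigD1 i).
Qed.

Lemma matrix_block2_decomp M (b : 'I_d -> 'I_d -> F) :
  M = \sum_k (M k k - \sum_(j | j != k) (b k j + b j k)) *: delta_mx k k
      + \sum_i \sum_(j | j != i) block2 i j (b i j) (M i j / 2) (M j i / 2) (b i j).
Proof.
pose e (i j : 'I_d) : 'M[F]_d := delta_mx i j.
have pairsE : \sum_i \sum_(j | j != i) block2 i j (b i j) (M i j / 2) (M j i / 2) (b i j) =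
    \sum_i \sum_(j | j != i) ((b i j + b j i) *: e i i + M i j *: e i j).
  transitivity (\sum_i \sum_(j | j != i) (b i j *: e i i + M i j / 2 *: e i j)
              + \sum_i \sum_(j | j != i) (M j i / 2 *: e j i + b i j *: e j j)).
    rewrite -big_split; apply: eq_bigr => i _; rewrite -big_split; apply: eq_bigr => j _.
    by rewrite /block2 /= !addrA.
  rewrite [X in _ + X]sum_offdiagC -big_split; apply: eq_bigr => i _.
  rewrite -big_split; apply: eq_bigr => j _.
  by rewrite /= [M i j in RHS]splitr !scalerDl [_ *: e i j + b j i *: _]addrC addrACA.
have offdiagE : \sum_i \sum_(j | j != i) ((b i j + b j i) *: e i i + M i j *: e i j) =
    \sum_k (\sum_(j | j != k) (b k j + b j k)) *: e k k
    + \sum_i \sum_(j | j != i) M i j *: e i j.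
  by rewrite -big_split; apply: eq_bigr => i _; rewrite big_split scaler_suml.
rewrite pairsE offdiagE addrA -big_split /=.
under eq_bigr => k _ do rewrite -scalerDl subrK.
exact: matrix_sum_delta_offdiag.
Qed.

End Block2.

Section PCP2.
Variable C : numClosedFieldType.
Variable d : nat.
Implicit Types (A B : 'M[C]_d) (v w : 'cV[C]_d).

Lemma PCP2_0 : PCP2 (0 : 'M[C]_d) 0.
Proof. by exists [::]; rewrite !big_nil. Qed.

Lemma PCP2_add A1 B1 A2 B2 : PCP2 A1 B1 -> PCP2 A2 B2 -> PCP2 (A1 + A2) (B1 + B2).
Proof.
move=> [s1 [h1 [-> ->]]] [s2 [h2 [-> ->]]].
exists (s1 ++ s2); split; last by rewrite !big_cat.
by move=> p; rewrite mem_cat => /orP[/h1|/h2].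
Qed.

Lemma PCP2_sum (I : Type) (r : seq I) (P : pred I) (F G : I -> 'M[C]_d) :
  (forall i, P i -> PCP2 (F i) (G i)) ->
  PCP2 (\sum_(i <- r | P i) F i) (\sum_(i <- r | P i) G i).
Proof. exact: (big_ind2 _ PCP2_0 PCP2_add). Qed.

Lemma PCP2_rank_one v w : (sigma (hadv v w) <= 2)%N ->
  PCP2 (ketbra (hadv v (conjv v)) (hadv w (conjv w))) (ketbra (hadv v w) (hadv v w)).
Proof.
move=> hvw; exists [:: (v, w)]; split; last by rewrite !big_seq1.
by move=> p; rewrite inE => /eqP ->.
Qed.

Lemma ketbraE (x y : 'cV[C]_d) k l : ketbra x y k l = x k 0 * (y l 0)^*.
Proof. by rewrite !mxE big_ord1 !mxE. Qed.

Lemma sigma_le2 (i j : 'I_d) v :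
  (forall k, k != i -> k != j -> v k 0 = 0) -> (sigma v <= 2)%N.
Proof.
move=> vij; apply: (leq_trans (subset_leq_card (B := [set i; j]) _)).
  apply/subsetP => k; rewrite !inE; apply: contraNT => /norP[ki kj].
  by rewrite vij.
by rewrite cards2; case: (i != j).
Qed.

Lemma PCP2_diag (k : 'I_d) (x : C) : 0 <= x ->
  PCP2 (x *: delta_mx k k) (x *: delta_mx k k).
Proof.
move=> x0.
pose v : 'cV[C]_d := sqrtC x *: delta_mx k 0.
pose w : 'cV[C]_d := delta_mx k 0.
have xE : sqrtC x * (sqrtC x)^* = x by rewrite -normCK -normrX sqrtCK ger0_norm.
have eA : x *: delta_mx k k = ketbra (hadv v (conjv v)) (hadv w (conjv w)).
  apply/matrixP => m n; rewrite ketbraE !mxE.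
  by case: (m == k); case: (n == k); rewrite /= ?(mulr1, mulr0, mul0r, conjC0, conjC1, xE).
have eB : x *: delta_mx k k = ketbra (hadv v w) (hadv v w).
  apply/matrixP => m n; rewrite ketbraE !mxE.
  by case: (m == k); case: (n == k); rewrite /= ?(mulr1, mulr0, mul0r, conjC0, conjC1, xE).
rewrite {1}eA eB; apply: PCP2_rank_one; apply: (sigma_le2 (i := k) (j := k)) => m mk _.
by rewrite !mxE (negbTE mk) mulr0.
Qed.

Definition vec2 (i j : 'I_d) (x y : C) : 'cV[C]_d :=
  \col_k (if k == i then x else if k == j then y else 0).

Section Pair.
Variables i j : 'I_d.
Hypothesis neq_ij : i != j.

Lemma hadv_vec2 x y x' y' :
  hadv (vec2 i j x y) (vec2 i j x' y') = vec2 i j (x * x') (y * y').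
Proof. by apply/colP => k; rewrite !mxE; case: ifP => _; [|case: ifP => _; rewrite ?mul0r]. Qed.

Lemma conjv_vec2 x y : conjv (vec2 i j x y) = vec2 i j x^* y^*.
Proof. by apply/colP => k; rewrite !mxE; case: ifP => _; [|case: ifP => _; rewrite ?conjC0]. Qed.

Lemma sigma_vec2 x y : (sigma (vec2 i j x y) <= 2)%N.
Proof. by apply: (sigma_le2 (i := i) (j := j)) => k /negbTE ki /negbTE kj; rewrite mxE ki kj. Qed.

Lemma vec2E x y k : vec2 i j x y k 0 = x * (k == i)%:R + y * (k == j)%:R.
Proof.
rewrite mxE; have [->|_] := eqVneq k i.
  by rewrite (negbTE neq_ij) mulr1 mulr0 addr0.
by case: (k == j); rewrite ?mulr1 ?mulr0 ?add0r.
Qed.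

Lemma ketbra_vec2 x y x' y' :
  ketbra (vec2 i j x y) (vec2 i j x' y') =
  block2 i j (x * x'^*) (x * y'^*) (y * x'^*) (y * y'^*).
Proof.
apply/matrixP => k l; rewrite ketbraE !vec2E !mxE -!mulnb !natrM.
by rewrite !rmorphD !rmorphM /= !conjC_nat; ring.
Qed.

Lemma PCP2_vec2 (x y x' y' : C) :
  PCP2 (block2 i j (`|x * x'| ^+ 2) (`|x * y'| ^+ 2) (`|y * x'| ^+ 2) (`|y * y'| ^+ 2))
       (block2 i j (`|x * x'| ^+ 2) (x * x' * (y * y')^*) (y * y' * (x * x')^*)
                   (`|y * y'| ^+ 2)).
Proof.
have sqE (z z' : C) : z * z^* * (z' * z'^*)^* = `|z * z'| ^+ 2.
  by rewrite normCK !rmorphM /= conjCK; ring.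
have := PCP2_rank_one (v := vec2 i j x y) (w := vec2 i j x' y').
by rewrite hadv_vec2 !conjv_vec2 !hadv_vec2 !ketbra_vec2 !sqE -!normCK; apply; apply: sigma_vec2.
Qed.

Lemma PCP2_offdiag (b : C) : 0 <= b -> PCP2 (block2 i j 0 0 b 0) 0.
Proof.
move=> b0; have := PCP2_vec2 0 (sqrtC b) 1 0.
rewrite !(mul0r, mulr0, mulr1, normr0, expr0n, conjC0) /= block2_0.
by rewrite -normrX sqrtCK ger0_norm.
Qed.

Lemma PCP2_pair (c a a' : C) : 0 <= a -> 0 <= a' -> `|c| ^+ 2 <= a * a' ->
  PCP2 (block2 i j `|c| a a' `|c|) (block2 i j `|c| c c^* `|c|).
Proof.
move=> a0 a'0 caa'.
have [a_eq0|a_neq0] := eqVneq a 0.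
  have c0 : c = 0.
    apply/eqP; rewrite -normr_eq0 -sqrf_eq0 eq_le exprn_ge0 ?normr_ge0 // andbT.
    by rewrite a_eq0 mul0r in caa'.
  by rewrite a_eq0 c0 normr0 conjC0 block2_0; apply: PCP2_offdiag.
have a_gt0 : 0 < a by rewrite lt_def a_neq0.
(* The witness v = (1, conj g / s), w = (g, s) has v .* w = (g, conj g). *)
set g := sqrtC c; set s := sqrtC a.
have gE : `|g| ^+ 2 = `|c| by rewrite -normrX sqrtCK.
have sE : `|s| ^+ 2 = a by rewrite -normrX sqrtCK ger0_norm.
have ysE : g^* / s * s = g^* by rewrite divfK ?sqrtC_eq0.
have b0 : 0 <= a' - `|c| ^+ 2 / a by rewrite subr_ge0 ler_pdivrMr // mulrC.
have := PCP2_add (PCP2_vec2 1 (g^* / s) g s) (PCP2_offdiag b0).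
rewrite block2D !addr0 !mul1r ysE conjCK -rmorphM -expr2 sqrtCK norm_conjC gE sE.
by rewrite !normrM normfV norm_conjC !exprMn exprVn gE sE mulrAC -expr2 addrC subrK.
Qed.
End Pair.

Lemma trmx_conjv_delta2 (i j : 'I_d) (x y : C) :
  (conjv (x *: delta_mx i 0 + y *: delta_mx j 0))^T = x^* *: 'e_i + y^* *: 'e_j.
Proof. by apply/rowP => k; rewrite !mxE rmorphD !rmorphM /= !conjC_nat !eqxx !andbT. Qed.

Lemma mulmx_delta_row_col B (k l : 'I_d) : delta_mx (0 : 'I_1) k *m B *m delta_mx l 0 = (B k l)%:M.
Proof. by rewrite -rowE -colE; apply/matrixP => ? ?; rewrite !ord1 !mxE. Qed.

Lemma quad_form_delta2 B (i j : 'I_d) (x y : C) :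
  ((conjv (x *: delta_mx i 0 + y *: delta_mx j 0))^T *m B *m
     (x *: delta_mx i 0 + y *: delta_mx j 0 : 'cV_d)) 0 0 =
  x^* * B i i * x + x^* * B i j * y + y^* * B j i * x + y^* * B j j * y.
Proof.
rewrite trmx_conjv_delta2 !(mulmxDl, mulmxDr) -!scalemxAl -!scalemxAr !mulmx_delta_row_col.
by rewrite !mxE /= !mulr1n; ring.
Qed.

Lemma psd_diag_ge0 B : psd B -> forall k, 0 <= B k k.
Proof.
move=> psdB k; have := psdB (1 *: delta_mx k 0 + 0 *: delta_mx k 0).
by rewrite quad_form_delta2 conjC1 conjC0 !mulr0 !mul0r !addr0 mulr1 mul1r.
Qed.

Lemma psd_hermitian B : psd B -> forall i j, B j i = (B i j)^*.
Proof.
move=> psdB i j.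
have form_real c : let z := B i i + B i j * c + c^* * B j i + c^* * B j j * c in z^* = z.
  have := geC0_conj (psdB (1 *: delta_mx i 0 + c *: delta_mx j 0)).
  by rewrite quad_form_delta2 conjC1 !mul1r !mulr1.
have := form_real 1; have := form_real 'i.
rewrite /= !rmorphD !rmorphM /= !conjC1 !conjCi raddfN /= conjCi opprK !mulr1 !mul1r.
rewrite !(geC0_conj (psd_diag_ge0 psdB _)) => e2 e1.
set u := B i j in e1 e2 *; set w := B j i in e1 e2 *.
set p := B i i in e1 e2; set q := B j j in e1 e2.
(* The forms at e_i + e_j and e_i + 'i e_j are real. *)
have : (w - u^*) *+ 2 =
    (p + u + w + q - (p + u^* + w^* + q))
    - 'i * (p + u^* * - 'i + 'i * w^* + 'i * q * - 'i - (p + u * 'i + - 'i * w + - 'i * q * 'i))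
    + ('i ^+ 2 + 1) * (w^* - u^* + w - u) by ring.
rewrite -e1 e2 !subrr mulr0 subr0 sqrCi addNr mul0r addr0.
by move/eqP; rewrite mulrn_eq0 subr_eq0 => /eqP.
Qed.

Lemma diag_dominant_offdiag_sum B : diag_dominant B ->
  forall k, \sum_(j | j != k) (`|B k j| / 2 + `|B j k| / 2) <= `|B k k|.
Proof.
move=> domB k; have [row_le col_le] := domB k.
rewrite big_split -!mulr_suml /= [leRHS]splitr.
by apply: lerD; rewrite ler_pM2r ?invr_gt0 ?ltr0n.
Qed.

Theorem PCP2_diag_dominant A B :
  (forall i, A i i = B i i) -> entrywise_nonneg A -> psd B ->
  (forall i j, `|B i j| ^+ 2 <= A i j * A j i) -> diag_dominant B ->
  PCP2 A B.
Proof.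
move=> diagAB A_ge0 psdB BA domB.
pose b i j := `|B i j| / 2.
rewrite (matrix_block2_decomp A b) (matrix_block2_decomp B b).
apply: PCP2_add; apply: PCP2_sum => i _.
  rewrite diagAB; apply: PCP2_diag.
  by rewrite subr_ge0 -[leRHS]ger0_norm ?psd_diag_ge0 ?diag_dominant_offdiag_sum.
apply: PCP2_sum => j ji.
have -> : b i j = `|B i j / 2| by rewrite normf_div normr_nat.
have -> : B j i / 2 = (B i j / 2)^*
  by rewrite psd_hermitian // fmorph_div /= conjC_nat.
apply: PCP2_pair; rewrite 1?eq_sym ?divr_ge0 //.
rewrite normf_div normr_nat expr_div_n mulrACA -invfM -expr2.
by rewrite ler_wpM2r // invr_ge0 exprn_ge0.
Qed.

End PCP2.

Local Open Scope complex_scope.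

Theorem lemma3p8 (R : realType) (d : nat) (A B : 'M[R[i]]_d) :
  (forall i : 'I_d, A i i = B i i) ->
  entrywise_nonneg A ->
  psd B ->
  (forall i j : 'I_d, `|B i j| ^+ 2 <= A i j * A j i) ->
  diag_dominant B ->
  PCP2 A B.
Proof. exact: PCP2_diag_dominant. Qed.
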